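(* Let $n\ge1$ be an integer and let $\varepsilon,\alpha,C_0,z_0$ be complex constants with $\alpha\neq0$. Then the rational function $$y(z)=\frac{C_0}{\alpha}+\frac{2(-1)^{n-1}(2n-1)!\,\varepsilon}{\alpha\,(n-1)!\,(z+z_0)^n}$$ is a solution of the ordinary differential equation $$\varepsilon\frac{d^ny}{dz^n}+\frac{\alpha}{2}y^2-C_0y+\frac{C_0^2}{2\alpha}=0 .$$ *)

From HB Require Import structures.
From mathcomp Require Import all_boot all_order all_algebra.
From mathcomp Require Import complex.
From mathcomp Require Import all_classical all_reals all_analysis.

From HB Require Import structures.
From mathcomp Require Import all_boot all_order all_algebra.
From mathcomp Require Import complex.
From mathcomp Require Import all_classical all_reals all_analysis.
Import Order.TTheory GRing.Theory Num.Theory.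
Import numFieldNormedType.Exports.
From mathcomp Require Import ring zify.
Local Open Scope ring_scope.

(* Write y = C0/alpha + a/(z+z0)^n.  The k-th derivative of a/(z+z0)^n is
   a (-1)^k n(n+1)...(n+k-1) / (z+z0)^(n+k), and the quadratic part of the
   equation is the perfect square (alpha/2)(y - C0/alpha)^2 = (alpha/2) a^2/(z+z0)^(2n).
   Both remaining terms are multiples of (z+z0)^(-2n), and the constant a is
   exactly the one for which their coefficients cancel. *)

(* No derivability is needed: both sides are limits of the same difference quotients. *)
Lemma derive1_addl (R : numFieldType) (V : normedModType R) (c : V) (f : R -> V) :
  derive1 (fun w => c + f w) = derive1 f.
Proof.
apply/funext => x; rewrite /derive1.
suff -> : (fun h : R => h^-1 *: (c + f (h + x) - (c + f x))) =
          (fun h => h^-1 *: (f (h + x) - f x)) by [].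
by apply/funext => h; rewrite opprD addrACA subrr add0r.
Qed.

Lemma derive1n_addl (R : numFieldType) (V : normedModType R) (c : V) (f : R -> V) k :
  derive1n k.+1 (fun w => c + f w) = derive1n k.+1 f.
Proof. by rewrite !derive1Sn derive1_addl. Qed.

Section InverseShiftedPower.
Context {K : numFieldType} {z0 : K}.

Lemma nbhs_addr_neq0 (x : K) : x + z0 != 0 -> \forall w \near x, w + z0 != 0.
Proof.
move=> xz0; apply/nbhs_ballP; exists `|x + z0|; first by rewrite /= normr_gt0.
move=> w; rewrite -ball_normE /=; apply: contraTneq => /eqP.
by rewrite addr_eq0 => /eqP ->; rewrite opprK ltxx.
Qed.

(* The library states this as [is_deriveV] only over a [realType]. *)
Lemma is_derive_inv {f : K -> K} {x v t : K} : f x != 0 -> is_derive x v f t ->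
  is_derive x v (fun w => (f w)^-1) (- (f x) ^- 2 *: t).
Proof.
move=> fx0 [df <-]; apply: DeriveDef; first exact: derivableV.
exact: deriveV.
Qed.

Lemma is_derive_shift_powV (a x : K) m : x + z0 != 0 ->
  is_derive x 1 (fun w => a / (w + z0) ^+ m) (- (a * m%:R) / (x + z0) ^+ m.+1).
Proof.
move=> xz0.
have dpow := is_deriveX m (is_derive_shift x 1 z0).
have pow_neq0 : (shift z0 ^+ m) x != 0 by rewrite exprfctE expf_neq0.
have := is_deriveZ a (is_derive_inv pow_neq0 dpow).
rewrite exprfctE /= => dV.
have -> : (fun w => a / (w + z0) ^+ m) = a \*: (fun w => (w + z0) ^- m) by [].
apply: is_derive_eq dV _.
rewrite [_%:A]mulr1 /GRing.scale /=.
case: m {dpow pow_neq0} => [|m]; first by rewrite mulr0n !(mul0r, mulr0, oppr0).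
rewrite !exprS /=; set p := (x + z0) ^+ m.
have p_neq0 : p != 0 by rewrite expf_neq0.
by field; rewrite p_neq0 xz0.
Qed.

(* [(m + k).-1 ^_ k] is the rising factorial m (m+1) ... (m+k-1). *)
Lemma derive1n_shift_powV (a x : K) m k : x + z0 != 0 ->
  \forall w \near x, derive1n k (fun w => a / (w + z0) ^+ m) w
                    = a * (-1) ^+ k * ((m + k).-1 ^_ k)%:R / (w + z0) ^+ (m + k).
Proof.
elim: k x => [|k IH] x xz0.
  by near=> w; rewrite expr0 addn0 !mulr1.
apply: filterS (nbhs_addr_neq0 _ xz0) => w wz0.
rewrite derive1nS derive1E (near_eq_derive _ (IH w wz0)).
have [_ ->] := is_derive_shift_powV (a * (-1) ^+ k * ((m + k).-1 ^_ k)%:R) _ (m + k) wz0.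
rewrite addnS ffactnS /= natrM !exprS.
by field; rewrite expf_neq0 // wz0.
Unshelve. all: by end_near.
Qed.

Lemma derivable_derive1n_shift_powV (a x : K) m k : x + z0 != 0 ->
  derivable (derive1n k (fun w => a / (w + z0) ^+ m)) x 1.
Proof.
move=> xz0; set c := a * (-1) ^+ k * ((m + k).-1 ^_ k)%:R.
have [dc _] := is_derive_shift_powV c x (m + k) xz0.
apply: near_eq_derivable dc.
by apply: filterS (derive1n_shift_powV a _ m k xz0) => w ->.
Qed.

End InverseShiftedPower.

Theorem mainTheorem5 (R : realType) (n : nat) (eps alpha C0 z0 : R[i])
  (hn : (1 <= n)%N) (halpha : alpha != 0) :
  let y : (R[i] : numFieldType) -> (R[i] : numFieldType) := fun z =>
    C0 / alpha
    + (2 * (-1) ^+ n.-1 * (n.*2.-1)`!%:R * eps)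
      / (alpha * (n.-1)`!%:R * (z + z0) ^+ n) in
  forall z : (R[i] : numFieldType), z + z0 != 0 ->
    (forall k, (k < n)%N -> derivable (derive1n k y) z 1) /\
    eps * derive1n n y z + alpha / 2 * y z ^+ 2 - C0 * y z
      + C0 ^+ 2 / (2 * alpha) = 0.
Proof.
case: n hn => // m _ y z zz0.
set a := 2 * (-1) ^+ m * (m.*2.+1)`!%:R * eps / (alpha * m`!%:R).
have -> : y = fun w => C0 / alpha + a / (w + z0) ^+ m.+1.
  by apply/funext => w; rewrite /y /a invfM mulrA.
split.
  case=> [_|k _]; last by rewrite derive1n_addl; exact: derivable_derive1n_shift_powV.
  apply: derivableD; first exact: derivable_cst.
  exact: (derivable_derive1n_shift_powV a z m.+1 0 zz0).
rewrite derive1n_addl (nbhs_singleton (derive1n_shift_powV _ _ _ _ zz0)).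
have fact_split : ((m.+1 + m.+1).-1 ^_ m.+1 * m`!)%N = (m.*2.+1)`!.
  rewrite addSn addnS /= addnn -[RHS](@ffact_fact _ m.+1); last by rewrite -addnn; lia.
  by rewrite (_ : (m.*2.+1 - m.+1)%N = m) //; lia.
have fact_neq0 : (m`!%:R : R[i]) != 0 by rewrite pnatr_eq0 -lt0n fact_gt0.
have pow_neq0 : (z + z0) ^+ m.+1 != 0 by rewrite expf_neq0.
rewrite /a -fact_split natrM exprD exprS.
set u := (z + z0) ^+ m.+1; set s := (-1) ^+ m.
by field; rewrite halpha fact_neq0 pow_neq0.
Qed.
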